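(* Let $p$ be a prime, $n\ge2$, let $F,G:\mathbb{F}_p^n\to\mathbb{F}_p^n$ and let $\mathcal{E}=\{e_1,\dots,e_n\}$ be a basis of $\mathbb{F}_p^n$ over $\mathbb{F}_p$ with coordinates $x_1,\dots,x_n$ relative to $\mathcal{E}$. Then \[\Delta_{e_1}F(x_1,\dots,x_n)=\Delta_{e_2}G(x_1,\dots,x_n)\quad\text{for all }(x_1,\dots,x_n)\in\mathbb{F}_p^n\] if and only if for every nonzero $\mu\in\mathbb{F}_p^n$, writing the algebraic normal forms \[\mu\cdot F=\sum_{(i_1,\dots,i_n)}f^{(\mu)}_{(i_1,\dots,i_n)}\prod_{j=1}^nx_j^{i_j},\qquad \mu\cdot G=\sum_{(i_1,\dots,i_n)}g^{(\mu)}_{(i_1,\dots,i_n)}\prod_{j=1}^nx_j^{i_j},\] the coefficients satisfy \[\sum_{k=i_1+1}^{p-1}\binom{k}{k-i_1}f^{(\mu)}_{(k,i_2,i_3,\dots,i_n)}=\sum_{k=i_2+1}^{p-1}\binom{k}{k-i_2}g^{(\mu)}_{(i_1,k,i_3,\dots,i_n)}\] for all $i_1,i_2\in\{0,\dots,p-2\}$ and $(i_3,\dots,i_n)\in\{0,\dots,p-1\}^{n-2}$, and \[\sum_{k=j+1}^{p-1}\binom{k}{k-j}f^{(\mu)}_{(k,p-1,i_3,\dots,i_n)}=\sum_{k=j+1}^{p-1}\binom{k}{k-j}g^{(\mu)}_{(p-1,k,i_3,\dots,i_n)}=0\] for all $j\in\{0,\dots,p-2\}$ and $(i_3,\dots,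i_n)\in\{0,\dots,p-1\}^{n-2}$.
   Context: $\Delta_aF(x)=F(x+a)-F(x)$ for $a\in\mathbb{F}_p^n$. Writing $x=\sum_jx_je_j$, every function $h:\mathbb{F}_p^n\to\mathbb{F}_p$ has a unique algebraic normal form $h=\sum_{(i_1,\dots,i_n)\in\{0,\dots,p-1\}^n}h_{(i_1,\dots,i_n)}\prod_jx_j^{i_j}$ with coefficients in $\mathbb{F}_p$. For $\mu\in\mathbb{F}_p^n$, $\mu\cdot F$ denotes the component function $x\mapsto\sum_{k=1}^n\mu_kF_k(x)$ where $F=(F_1,\dots,F_n)$ (similarly for $G$). Binomial coefficients are taken modulo $p$ and all equalities are in $\mathbb{F}_p$. *)

From HB Require Import structures.
From mathcomp Require Import all_boot all_order all_algebra all_fingroup.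
Set Implicit Arguments. Unset Strict Implicit. Unset Printing Implicit Defensive.
Import GRing.Theory.
Local Open Scope ring_scope.

(* The coordinate indices 1 and 2 of the paper (0 and 1 here), given n >= 2. *)
Definition ix0 (n : nat) (hn : (1 < n)%N) : 'I_n := Ordinal (ltnW hn).
Definition ix1 (n : nat) (hn : (1 < n)%N) : 'I_n := Ordinal hn.

Definition expo (n p : nat) := {ffun 'I_n -> 'I_p}.

Definition upd (n p : nat) (t : expo n p) (j : 'I_n) (k : 'I_p) : expo n p :=
  [ffun l => if l == j then k else t l].

Definition comp_fun (p n : nat) (mu : 'rV['F_p]_n)
    (F : 'rV['F_p]_n -> 'rV['F_p]_n) (x : 'rV['F_p]_n) : 'F_p :=
  \sum_(k < n) mu 0 k * F x 0 k.

Definition monom (p n : nat) (i : expo n p) (c : 'rV['F_p]_n) : 'F_p :=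
  \prod_(j < n) c 0 j ^+ i j.

(* a is an algebraic normal form of h w.r.t. the basis given by the rows of E
   (e_j = row j E, so the point with coordinates c is c *m E). *)
Definition is_anf (p n : nat) (E : 'M['F_p]_n) (h : 'rV['F_p]_n -> 'F_p)
    (a : {ffun expo n p -> 'F_p}) : bool :=
  [forall c : 'rV['F_p]_n, h (c *m E) == \sum_(i : expo n p) a i * monom i c].

(* The (unique, for a basis E and p prime) ANF coefficient function. *)
Definition anf (p n : nat) (E : 'M['F_p]_n) (h : 'rV['F_p]_n -> 'F_p)
    : {ffun expo n p -> 'F_p} :=
  odflt [ffun => 0] [pick a | is_anf E h a].

Definition Delta (p n : nat) (a : 'rV['F_p]_n)
    (F : 'rV['F_p]_n -> 'rV['F_p]_n) (x : 'rV['F_p]_n) : 'rV['F_p]_n :=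
  F (x + a) - F x.

From HB Require Import structures.
From mathcomp Require Import all_boot all_order all_algebra all_fingroup.
From mathcomp Require Import finfield.
Set Implicit Arguments. Unset Strict Implicit. Unset Printing Implicit Defensive.
Import GRing.Theory.
Local Open Scope ring_scope.

(* Translating x by e_j acts on algebraic normal forms through the binomial
   expansion of (x_j + 1)^i: if a is the ANF of h, then the ANF of
   x |-> h(x + e_j) - h(x) is D_j a, where
   (D_j a)_t = sum_(k > t_j) C(k, k - t_j) a_(t[j := k]).
   ANFs exist (interpolate with the indicators 1 - (x - y)^(p-1)) and are
   unique (there are as many coefficient tables as functions), so
   Delta_(e_1) F = Delta_(e_2) G holds componentwise iff D_1 f = D_2 g for
   the ANFs f, g of every component mu . F, mu . G; unit vectors mu suffice
   for the converse.  Reading D_1 f = D_2 g entrywise gives the stated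
   equations: when t_2 = p - 1 the right-hand side is an empty sum, and
   symmetrically when t_1 = p - 1. *)

Section CoordinateUpdate.

Variables n p : nat.
Implicit Types (t : expo n p) (j l : 'I_n) (k : 'I_p).

Lemma upd_same t j k : upd t j k j = k.
Proof. by rewrite ffunE eqxx. Qed.

Lemma upd_other t j k l : l != j -> upd t j k l = t l.
Proof. by move=> lj; rewrite ffunE (negbTE lj). Qed.

Lemma upd_upd t j k k' : upd (upd t j k) j k' = upd t j k'.
Proof. by apply/ffunP=> l; rewrite !ffunE; case: (l == j). Qed.

Lemma upd_id t j : upd t j (t j) = t.
Proof. by apply/ffunP=> l; rewrite ffunE; case: eqP => // ->. Qed.

End CoordinateUpdate.

Lemma exprD1nB (R : pzRingType) (N K : nat) (x : R) : (K <= N)%N ->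
  (x + 1) ^+ K - x ^+ K = \sum_(m < N | (m < K)%N) 'C(K, m)%:R * x ^+ m.
Proof.
move=> le_KN; rewrite exprD1n big_ord_recr /= binn mulr1n addrK.
under eq_bigr do rewrite -mulr_natl.
exact: (big_ord_widen _ (fun m => 'C(K, m)%:R * x ^+ m) le_KN).
Qed.

Lemma finField_eq_indicator (K : finFieldType) (x y : K) :
  (x == y)%:R = 1 - (x - y) ^+ #|K|.-1.
Proof.
have gt1 := finNzRing_gt1 K.
have [->|neq] := eqVneq x y.
  by rewrite subrr expr0n -subn1 subn_eq0 leqNgt gt1 subr0.
have nz : x - y != 0 by rewrite subr_eq0.
apply/esym/eqP; rewrite subr_eq0 eq_sym.
by rewrite -(inj_eq (mulIf nz)) mul1r -exprSr (ltn_predK gt1) expf_card.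
Qed.

Lemma rV_eq_prod (R : comPzSemiRingType) (K : eqType) m (b c : 'rV[K]_m) :
  (c == b)%:R = \prod_j (c 0 j == b 0 j)%:R :> R.
Proof.
have [->|neq] := eqVneq c b; first by rewrite big1 // => j _; rewrite eqxx.
have [j cbj | cb] := pickP (fun j => c 0 j != b 0 j).
  by rewrite (bigD1 j) //= (negbTE cbj) mul0r.
by case/eqP: neq; apply/rowP => j; apply/eqP/negbFE/cb.
Qed.

Section AlgebraicNormalForm.

Variables p n : nat.
Local Notation coefs := {ffun expo n p -> 'F_p}.
Implicit Types (a : coefs) (i t : expo n p) (j : 'I_n).
Implicit Types (c : 'rV['F_p]_n) (h : 'rV['F_p]_n -> 'F_p).

Definition anf_eval a c : 'F_p := \sum_(i : expo n p) a i * monom i c.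

Definition anf_diff (j : 'I_n) a : coefs :=
  [ffun t : expo n p =>
     \sum_(k : 'I_p | (t j < k)%N) 'C(k, k - t j)%:R * a (upd t j k)].

Lemma anf_diff_upd j a t k :
  anf_diff j a (upd t j k) =
  \sum_(k' : 'I_p | (k < k')%N) 'C(k', k' - k)%:R * a (upd t j k').
Proof. by rewrite ffunE upd_same; under eq_bigr do rewrite upd_upd. Qed.

Lemma anf_diff_top j a t : nat_of_ord (t j) = p.-1 -> anf_diff j a t = 0.
Proof.
move=> tj; rewrite ffunE big_pred0 // => k.
by rewrite ltnNge tj -ltnS (ltn_predK (ltn_ord k)) ltn_ord.
Qed.

Lemma monom_diff j i c :
  monom i (c + delta_mx 0 j) - monom i c =
  \sum_(m < p | (m < i j)%N) 'C(i j, m)%:R * monom (upd i j m) c.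
Proof.
rewrite /monom (bigD1 j) //= [X in _ - X](bigD1 j) //=.
have -> : \prod_(l < n | l != j) (c + delta_mx 0 j) 0 l ^+ i l
        = \prod_(l < n | l != j) c 0 l ^+ i l.
  by apply: eq_bigr => l lj; rewrite !mxE eqxx (negbTE lj) addr0.
rewrite !mxE !eqxx -mulrBl (exprD1nB _ (ltnW (ltn_ord (i j)))) mulr_suml.
apply: eq_bigr => m _; rewrite [in RHS](bigD1 j) //= upd_same -mulrA.
by congr (_ * (_ * _)); apply: eq_bigr => l lj; rewrite upd_other.
Qed.

(* Matches the terms (i, m), m < i_j, of the expanded left-hand side of
   anf_eval_diff with the terms (t, k) = (i[j := m], i_j), t_j < k, of the
   right-hand side. *)
Definition exchange_coord (j : 'I_n) (u : expo n p * 'I_p) : expo n p * 'I_p :=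
  (upd u.1 j u.2, u.1 j).

Lemma exchange_coordK j : involutive (exchange_coord j).
Proof. by case=> i m; rewrite /exchange_coord /= upd_upd upd_same upd_id. Qed.

Lemma anf_eval_diff j a c :
  anf_eval a (c + delta_mx 0 j) - anf_eval a c = anf_eval (anf_diff j a) c.
Proof.
rewrite /anf_eval -sumrB.
under eq_bigr do rewrite -mulrBr monom_diff mulr_sumr.
under [RHS]eq_bigr do rewrite ffunE mulr_suml.
rewrite (pair_big_dep xpredT (fun (i : expo n p) (m : 'I_p) => (m < i j)%N)).
rewrite (pair_big_dep xpredT (fun (t : expo n p) (k : 'I_p) => (t j < k)%N)).
rewrite (reindex_inj (inv_inj (exchange_coordK j))) /=.
apply: eq_big => [[i m]|[i m]]; rewrite /exchange_coord /= upd_same // => lt_m.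
by rewrite upd_upd upd_id bin_sub ?(ltnW lt_m) // mulrCA mulrA.
Qed.

Hypothesis p_pr : prime p.

Definition indicator_coef (y : 'F_p) (k : 'I_p) : 'F_p :=
  (1 - ('X - y%:P) ^+ p.-1)`_k.

Lemma Fp_eq_indicator (x y : 'F_p) :
  (x == y)%:R = \sum_(k < p) indicator_coef y k * x ^+ k.
Proof.
rewrite finField_eq_indicator card_Fp // /indicator_coef -horner_coef_wide.
  by rewrite !hornerE.
apply: leq_trans (size_polyD _ _) _.
rewrite geq_max size_polyN size_poly1 prime_gt0 //=.
apply: leq_trans (size_poly_exp_leq _ _) _.
by rewrite size_XsubC mul1n prednK // prime_gt0.
Qed.

Definition point_anf (b : 'rV['F_p]_n) : coefs :=
  [ffun i : expo n p => \prod_j indicator_coef (b 0 j) (i j)].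

Lemma anf_eval_point (b c : 'rV['F_p]_n) :
  anf_eval (point_anf b) c = (c == b)%:R.
Proof.
rewrite rV_eq_prod; under [RHS]eq_bigr do rewrite Fp_eq_indicator.
rewrite bigA_distr_bigA; apply: eq_bigr => i _.
by rewrite ffunE /monom -big_split.
Qed.

Lemma anf_eval_surj h : exists a, forall c, h c = anf_eval a c.
Proof.
exists [ffun i : expo n p => \sum_b h b * point_anf b i] => c.
have -> : h c = \sum_b h b * (c == b)%:R.
  rewrite (bigD1 c) //= eqxx mulr1 big1 ?addr0 // => b bc.
  by rewrite eq_sym (negbTE bc) mulr0.
under eq_bigr do rewrite -anf_eval_point /anf_eval mulr_sumr.
rewrite exchange_big; apply: eq_bigr => i _.
by rewrite ffunE mulr_suml; apply: eq_bigr => b _; rewrite mulrA.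
Qed.

(* Both sides have p ^ (p ^ n) elements, so the surjection is injective. *)
Lemma anf_eval_inj a a' : anf_eval a =1 anf_eval a' -> a = a'.
Proof.
move=> eq_aa'.
pose tab a : {ffun 'rV['F_p]_n -> 'F_p} := [ffun c => anf_eval a c].
have tab_onto y : y \in codom tab.
  have [b yb] := anf_eval_surj y.
  suff -> : y = tab b by exact: codom_f.
  by apply/ffunP => c; rewrite ffunE yb.
have /image_injP tab_inj : #|image tab (@predT coefs)| == #|@predT coefs|.
  by rewrite (eq_card tab_onto) !cardT -!cardE !card_ffun card_mx card_Fp //
    !card_ord mul1n.
by apply: tab_inj => //; apply/ffunP => c; rewrite !ffunE eq_aa'.
Qed.

Variable E : 'M['F_p]_n.

Lemma anf_evalE h c : h (c *m E) = anf_eval (anf E h) c.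
Proof.
rewrite /anf; case: pickP => [a /forallP a_anf | no_anf].
  exact/eqP/a_anf.
have [a ha] := anf_eval_surj (fun c => h (c *m E)).
have /negP[] := negbT (no_anf a).
by apply/forallP => c'; rewrite ha.
Qed.

Lemma eq_anf h h' : h =1 h' -> anf E h = anf E h'.
Proof. by move=> eq_h; apply: anf_eval_inj => c; rewrite -!anf_evalE eq_h. Qed.

Lemma comp_fun_Delta mu e (H : 'rV['F_p]_n -> 'rV['F_p]_n) x :
  comp_fun mu (Delta e H) x = comp_fun mu H (x + e) - comp_fun mu H x.
Proof. by rewrite -sumrB; apply: eq_bigr => k _; rewrite !mxE mulrBr. Qed.

Lemma comp_fun_delta k (H : 'rV['F_p]_n -> 'rV['F_p]_n) x :
  comp_fun (delta_mx 0 k) H x = H x 0 k.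
Proof.
rewrite /comp_fun (bigD1 k) //= big1 ?addr0; first by rewrite mxE !eqxx mul1r.
by move=> l lk; rewrite mxE (negbTE lk) andbF mul0r.
Qed.

Lemma anf_comp_Delta mu j (H : 'rV['F_p]_n -> 'rV['F_p]_n) :
  anf E (comp_fun mu (Delta (row j E) H)) = anf_diff j (anf E (comp_fun mu H)).
Proof.
apply: anf_eval_inj => c.
by rewrite -anf_evalE comp_fun_Delta rowE -mulmxDl -anf_eval_diff -!anf_evalE.
Qed.

Lemma Delta_eq_anf_diff (i0 i1 : 'I_n) (F G : 'rV['F_p]_n -> 'rV['F_p]_n) :
  E \in unitmx ->
  (forall x, Delta (row i0 E) F x = Delta (row i1 E) G x) <->
  (forall mu : 'rV['F_p]_n, mu != 0 ->
     anf_diff i0 (anf E (comp_fun mu F)) = anf_diff i1 (anf E (comp_fun mu G))).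
Proof.
move=> E_unit; split=> [eq_Delta mu _ | eq_diff x].
  by rewrite -!anf_comp_Delta; apply: eq_anf => x; rewrite /comp_fun eq_Delta.
rewrite -(mulmxKV E_unit x); apply/rowP => k.
have nz_k : delta_mx 0 k != 0 :> 'rV['F_p]_n.
  by apply/eqP => /rowP /(_ k); rewrite !mxE !eqxx; apply/eqP/oner_neq0.
by rewrite -!comp_fun_delta !anf_evalE !anf_comp_Delta (eq_diff _ nz_k).
Qed.

Lemma anf_diff_eq_iff (i0 i1 : 'I_n) f g : i0 != i1 ->
  anf_diff i0 f = anf_diff i1 g <->
  (forall t, (t i0 < p.-1)%N -> (t i1 < p.-1)%N ->
     \sum_(k : 'I_p | (t i0 < k)%N) 'C(k, k - t i0)%:R * f (upd t i0 k)
     = \sum_(k : 'I_p | (t i1 < k)%N) 'C(k, k - t i1)%:R * g (upd t i1 k)) /\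
  (forall (j : 'I_p) t, (j < p.-1)%N -> nat_of_ord (t i1) = p.-1 ->
     \sum_(k : 'I_p | (j < k)%N) 'C(k, k - j)%:R * f (upd t i0 k) = 0) /\
  (forall (j : 'I_p) t, (j < p.-1)%N -> nat_of_ord (t i0) = p.-1 ->
     \sum_(k : 'I_p | (j < k)%N) 'C(k, k - j)%:R * g (upd t i1 k) = 0).
Proof.
move=> i01; have i10 : i1 != i0 by rewrite eq_sym.
split=> [eq_diff | [eq_mid [f_top g_top]]].
  split; [|split] => [t _ _ | j t _ t1 | j t _ t0].
  - by move/ffunP/(_ t): eq_diff; rewrite !ffunE.
  - by rewrite -anf_diff_upd eq_diff anf_diff_top // upd_other.
  - by rewrite -anf_diff_upd -eq_diff anf_diff_top // upd_other.
have lt_pred (k : 'I_p) : nat_of_ord k != p.-1 -> (k < p.-1)%N.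
  by move=> ne; rewrite ltn_neqAle ne -ltnS (ltn_predK (ltn_ord k)) ltn_ord.
have f_top' t : nat_of_ord (t i1) = p.-1 -> anf_diff i0 f t = 0.
  move=> t1; have [t0 | /lt_pred lt0] := eqVneq (nat_of_ord (t i0)) p.-1.
    exact: anf_diff_top.
  by rewrite -[t](upd_id t i0) anf_diff_upd f_top.
have g_top' t : nat_of_ord (t i0) = p.-1 -> anf_diff i1 g t = 0.
  move=> t0; have [t1 | /lt_pred lt1] := eqVneq (nat_of_ord (t i1)) p.-1.
    exact: anf_diff_top.
  by rewrite -[t](upd_id t i1) anf_diff_upd g_top.
apply/ffunP => t.
have [t1 | /lt_pred lt1] := eqVneq (nat_of_ord (t i1)) p.-1.
  by rewrite f_top' // anf_diff_top.
have [t0 | /lt_pred lt0] := eqVneq (nat_of_ord (t i0)) p.-1.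
  by rewrite g_top' // anf_diff_top.
by rewrite !ffunE eq_mid.
Qed.

End AlgebraicNormalForm.

Theorem theorem3 (p n : nat) (hp : prime p) (hn : (1 < n)%N)
    (F G : 'rV['F_p]_n -> 'rV['F_p]_n) (E : 'M['F_p]_n) (hE : E \in unitmx) :
  (forall x : 'rV['F_p]_n,
      Delta (row (ix0 hn) E) F x = Delta (row (ix1 hn) E) G x)
  <->
  (forall mu : 'rV['F_p]_n, mu != 0 ->
    let f := anf E (comp_fun mu F) in
    let g := anf E (comp_fun mu G) in
    (forall t : expo n p,
       (t (ix0 hn) < p.-1)%N -> (t (ix1 hn) < p.-1)%N ->
       \sum_(k : 'I_p | (t (ix0 hn) < k)%N)
           ('C(k, k - t (ix0 hn)))%:R * f (upd t (ix0 hn) k)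
       = \sum_(k : 'I_p | (t (ix1 hn) < k)%N)
           ('C(k, k - t (ix1 hn)))%:R * g (upd t (ix1 hn) k))
    /\
    (forall (j : 'I_p) (t : expo n p), (j < p.-1)%N ->
       nat_of_ord (t (ix1 hn)) = p.-1 ->
       \sum_(k : 'I_p | (j < k)%N) ('C(k, k - j))%:R * f (upd t (ix0 hn) k) = 0)
    /\
    (forall (j : 'I_p) (t : expo n p), (j < p.-1)%N ->
       nat_of_ord (t (ix0 hn)) = p.-1 ->
       \sum_(k : 'I_p | (j < k)%N) ('C(k, k - j))%:R * g (upd t (ix1 hn) k) = 0)).
Proof.
have i01 : ix0 hn != ix1 hn by rewrite -val_eqE.
apply: (iff_trans (Delta_eq_anf_diff hp _ _ _ _ hE)).
by split=> eq_diff mu /eq_diff /(anf_diff_eq_iff _ _ i01).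
Qed.
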